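(* Let $A$ be an AUF algebra. The following are equivalent: (1) $A$ has a generating idempotent; (2) there are only finitely many isomorphism classes of irreducible quasicoherent left $A$-modules; (3) $A$ has only finitely many equivalence classes of primitive idempotents.
   Context: All algebras are associative $\mathbb C$-algebras, not necessarily unital. An idempotent is $e$ with $e^2=e$; for idempotents $f\le e$ means $ef=fe=f$; a nonzero idempotent is primitive if its only sub-idempotents are $0$ and itself. An algebra $A$ is AUF if there is a family $(e_i)_{i\in\mathfrak I}$ of mutually orthogonal idempotents with $\dim e_iAe_j<\infty$ and $A=\sum_{i,j}e_iAe_j$. A left $A$-module $M$ is quasicoherent if $\xi\in A\xi$ for all $\xi\in M$. Irreducible means nonzero with no nonzero proper submodules. An idempotent $e$ is generating if every irreducible quasicoherent left $A$-module is a quotient of $Ae$. Two idempotents $p,q$ are equivalent if there are $u\in qAp$, $v\in pAq$ with $vu=p$, $uv=q$. *)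

From HB Require Import structures.
From mathcomp Require Import all_boot all_order all_algebra.
From mathcomp Require Import complex Rstruct.
From Stdlib Require Import Reals.
Set Implicit Arguments. Unset Strict Implicit. Unset Printing Implicit Defensive.
Import GRing.Theory.
Local Open Scope ring_scope.

Definition C : fieldType := (Rdefinitions.R)[i].

Record nuAlg := NuAlg {
  alg_car :> lmodType C;
  amul : alg_car -> alg_car -> alg_car;
  amulA : forall x y z, amul x (amul y z) = amul (amul x y) z;
  amulDl : forall x y z, amul (x + y) z = amul x z + amul y z;
  amulDr : forall x y z, amul x (y + z) = amul x y + amul x z;
  amulZl : forall (c : C) x y, amul (c *: x) y = c *: amul x y;
  amulZr : forall (c : C) x y, amul x (c *: y) = c *: amul x y
}.

Section Defs.
Variable A : nuAlg.
Local Notation "x * y" := (amul x y) : ring_scope.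

Definition idempotent (e : A) : Prop := e * e = e.
Definition idem_le (f e : A) : Prop := e * f = f /\ f * e = f.
Definition primitive (e : A) : Prop :=
  idempotent e /\ e <> 0 /\
  forall f, idempotent f -> idem_le f e -> f = 0 \/ f = e.
Definition in_corner (q p u : A) : Prop := exists x, u = q * x * p.
Definition idem_equiv (p q : A) : Prop :=
  exists u v, in_corner q p u /\ in_corner p q v /\ v * u = p /\ u * v = q.

(* Finite-dimensionality of a subset of A (here always a subspace):
   spanned by a finite list of vectors. *)
Definition fin_dim (S : A -> Prop) : Prop :=
  exists s : seq A, forall x, S x ->
    exists c : 'I_(size s) -> C, x = \sum_(k < size s) c k *: s`_k.

Definition AUF : Prop :=
  exists (I : Type) (e : I -> A),
    (forall i, idempotent (e i)) /\
    (forall i j, i <> j -> e i * e j = 0) /\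
    (forall i j, fin_dim (in_corner (e i) (e j))) /\
    (forall a : A, exists s : seq (I * I * A),
        a = \sum_(t <- s) e t.1.1 * t.2 * e t.1.2).
End Defs.

Record amod (A : nuAlg) := AMod {
  mod_car :> lmodType C;
  act : A -> mod_car -> mod_car;
  actDl : forall a b m, act (a + b) m = act a m + act b m;
  actDr : forall a m n, act a (m + n) = act a m + act a n;
  actZl : forall (c : C) a m, act (c *: a) m = c *: act a m;
  actZr : forall (c : C) a m, act a (c *: m) = c *: act a m;
  actM : forall a b m, act (amul a b) m = act a (act b m)
}.

Section Modules.
Variable A : nuAlg.

Definition quasicoherent (M : amod A) : Prop :=
  forall m : M, exists a : A, act a m = m.

Definition submodule (M : amod A) (P : M -> Prop) : Prop :=
  P 0 /\ (forall x y, P x -> P y -> P (x + y)) /\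
  (forall (c : C) x, P x -> P (c *: x)) /\
  (forall a x, P x -> P (act a x)).

Definition irreducible (M : amod A) : Prop :=
  (exists m : M, m <> 0) /\
  forall P : M -> Prop, submodule P -> (forall m, P m -> m = 0) \/ (forall m, P m).

Definition mod_iso (M N : amod A) : Prop :=
  exists f : M -> N,
    (forall x y, f (x + y) = f x + f y) /\
    (forall (c : C) x, f (c *: x) = c *: f x) /\
    (forall a x, f (act a x) = act a (f x)) /\
    bijective f.

Definition left_ideal_of (e : A) (x : A) : Prop := exists a : A, x = amul a e.

(* M is a quotient of the left A-module Ae: there is a surjective A-module
   homomorphism Ae -> M (given as a map on A, only its restriction to Ae matters). *)
Definition quotient_of_Ae (e : A) (M : amod A) : Prop :=
  exists f : A -> M,
    (forall x y, left_ideal_of e x -> left_ideal_of e y -> f (x + y) = f x + f y) /\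
    (forall (c : C) x, left_ideal_of e x -> f (c *: x) = c *: f x) /\
    (forall a x, left_ideal_of e x -> f (amul a x) = act a (f x)) /\
    (forall m : M, exists2 x, left_ideal_of e x & f x = m).

Definition generating (e : A) : Prop :=
  idempotent e /\
  forall M : amod A, quasicoherent M -> irreducible M -> quotient_of_Ae e M.

Definition fin_irr_classes : Prop :=
  exists (n : nat) (Ms : 'I_n -> amod A),
    forall M : amod A, quasicoherent M -> irreducible M ->
      exists i, mod_iso M (Ms i).

Definition fin_prim_classes : Prop :=
  exists s : seq A, forall p, primitive p -> exists2 q, q \in s & idem_equiv p q.
End Modules.

(* An AUF algebra has local units and finite-dimensional corners [gAg], and
   nothing else is used.  For a primitive idempotent [p], Fitting's lemma in the
   finite-dimensional algebra [pAp] makes every element nilpotent or left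
   invertible, so the [x] such that [pAxp] has no left invertible element
   form a left ideal [N], and [A / N] is the unique irreducible quasicoherent
   module on which [p] acts nontrivially; two primitive idempotents acting
   nontrivially on the same irreducible module are equivalent.  Each local unit
   is a finite sum of primitive idempotents, so every irreducible quasicoherent
   module is reached by a primitive idempotent.  Hence finitely many classes of
   irreducible modules and of primitive idempotents determine each other, and a
   local unit for representatives of the module classes is generating. *)

From HB Require Import structures.
From mathcomp Require Import all_boot all_algebra zify.
From Stdlib Require Import Classical ClassicalEpsilon.
From Stdlib Require Import FunctionalExtensionality PropExtensionality.
Set Implicit Arguments. Unset Strict Implicit. Unset Printing Implicit Defensive.
Import GRing.Theory.
Local Open Scope ring_scope.

Notation "x ** y" := (amul x y) (at level 40, left associativity).

Section AlgebraTheory.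
Variable A : nuAlg.
Implicit Types x y z : A.

Lemma amul0l x : 0 ** x = 0.
Proof. by apply: (@addrI _ (0 ** x)); rewrite -amulDl !addr0. Qed.

Lemma amul0r x : x ** 0 = 0.
Proof. by apply: (@addrI _ (x ** 0)); rewrite -amulDr !addr0. Qed.

Lemma amulNl x y : (- x) ** y = - (x ** y).
Proof. by apply/eqP; rewrite -subr_eq0 opprK -amulDl addNr amul0l. Qed.

Lemma amulNr x y : x ** (- y) = - (x ** y).
Proof. by apply/eqP; rewrite -subr_eq0 opprK -amulDr addNr amul0r. Qed.

Lemma amulBl x y z : (x - y) ** z = x ** z - y ** z.
Proof. by rewrite amulDl amulNl. Qed.

Lemma amulBr x y z : x ** (y - z) = x ** y - x ** z.
Proof. by rewrite amulDr amulNr. Qed.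

Lemma amul_suml (I : Type) (r : seq I) (P : pred I) (F : I -> A) x :
  (\sum_(i <- r | P i) F i) ** x = \sum_(i <- r | P i) F i ** x.
Proof. exact: (big_morph (fun y => y ** x) (fun a b => amulDl a b x) (amul0l x)). Qed.

Lemma amul_sumr (I : Type) (r : seq I) (P : pred I) (F : I -> A) x :
  x ** (\sum_(i <- r | P i) F i) = \sum_(i <- r | P i) x ** F i.
Proof. exact: (big_morph (amul x) (amulDr x) (amul0r x)). Qed.

Lemma idem_le_trans (f g h : A) : idem_le f g -> idem_le g h -> idem_le f h.
Proof.
move=> [gf fg] [hg gh]; split; first by rewrite -gf amulA hg.
by rewrite -fg -amulA gh.
Qed.

Variable M : amod A.
Implicit Types m : M.

Lemma act0l m : act 0 m = 0.
Proof. by apply: (@addrI _ (act 0 m)); rewrite -actDl !addr0. Qed.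

Lemma act0r x : act x (0 : M) = 0.
Proof. by apply: (@addrI _ (act x (0 : M))); rewrite -actDr !addr0. Qed.

Lemma actBl x y m : act (x - y) m = act x m - act y m.
Proof. by apply: (@addIr _ (act y m)); rewrite -actDl !subrK. Qed.

Lemma act_suml (I : Type) (r : seq I) (F : I -> A) m :
  act (\sum_(i <- r) F i) m = \sum_(i <- r) act (F i) m.
Proof. exact: (big_morph (fun a => act a m) (fun a b => actDl a b m) (act0l m)). Qed.

Lemma act_sum_neq0 (r : seq A) m :
  act (\sum_(f <- r) f) m <> 0 -> exists2 f, f \in r & act f m <> 0.
Proof.
rewrite act_suml => hm; apply: NNPP => hr; apply: hm.
by apply: big1_seq => f /= fr; apply: NNPP => hf; apply: hr; exists f.
Qed.
End AlgebraTheory.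

Section Quotient.
Variables (R : pzRingType) (V : lmodType R).

Record subspace := Subspace {
  in_sub :> V -> Prop;
  sub0 : in_sub 0;
  subD : forall x y, in_sub x -> in_sub y -> in_sub (x + y);
  subZ : forall c x, in_sub x -> in_sub (c *: x) }.

Variable N : subspace.

Lemma subN x : N x -> N (- x).
Proof. by move=> Nx; rewrite -scaleN1r; apply: subZ. Qed.

Definition congr_mod (x y : V) := N (x - y).

Lemma congr_mod_refl x : congr_mod x x.
Proof. by rewrite /congr_mod subrr; apply: sub0. Qed.

Lemma congr_mod_sym x y : congr_mod x y -> congr_mod y x.
Proof. by rewrite /congr_mod => Nxy; rewrite -opprB; apply: subN. Qed.

Lemma congr_mod_trans x y z : congr_mod x y -> congr_mod y z -> congr_mod x z.
Proof. by rewrite /congr_mod => Nxy /(subD Nxy); rewrite addrA subrK. Qed.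

Lemma congr_modD x x' y y' :
  congr_mod x x' -> congr_mod y y' -> congr_mod (x + y) (x' + y').
Proof. by rewrite /congr_mod => Nx /(subD Nx); rewrite opprD addrACA. Qed.

Lemma congr_modZ c x x' : congr_mod x x' -> congr_mod (c *: x) (c *: x').
Proof. by rewrite /congr_mod -scalerBr; apply: subZ. Qed.

Definition coset_repr (x : V) : V := epsilon (inhabits 0) (congr_mod^~ x).

Lemma coset_reprP x : congr_mod (coset_repr x) x.
Proof.
by apply: (epsilon_spec (inhabits 0) (congr_mod^~ x)); exists x; apply: congr_mod_refl.
Qed.

Lemma coset_repr_eq x y : congr_mod x y -> coset_repr x = coset_repr y.
Proof.
move=> xy; rewrite /coset_repr; congr epsilon.
apply: functional_extensionality => z; apply: propositional_extensionality.
split=> [zx | zy]; first exact: congr_mod_trans zx xy.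
exact: congr_mod_trans zy (congr_mod_sym xy).
Qed.

Definition quot := {x : V | coset_repr x == x}.
HB.instance Definition _ := Choice.on quot.

Definition qpi (x : V) : quot :=
  exist _ (coset_repr x) (introT eqP (coset_repr_eq (coset_reprP x))).

Lemma qpiK q : qpi (val q) = q.
Proof. by apply: val_inj; apply/eqP; apply: (valP q). Qed.

Lemma qpi_eq x y : congr_mod x y -> qpi x = qpi y.
Proof. by move=> xy; apply: val_inj; apply: coset_repr_eq. Qed.

Lemma qpi_eqP x y : qpi x = qpi y -> congr_mod x y.
Proof.
move=> /(congr1 val) /= xy; apply: congr_mod_trans (coset_reprP y).
by rewrite -xy; apply: congr_mod_sym; apply: coset_reprP.
Qed.

Lemma qpi_valK x : congr_mod (val (qpi x)) x.
Proof. exact: coset_reprP. Qed.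

Definition qadd (a b : quot) := qpi (val a + val b).
Definition qopp (a : quot) := qpi (- val a).
Definition qscale (c : R) (a : quot) := qpi (c *: val a).

Lemma qaddA : associative qadd.
Proof.
move=> a b c; apply: qpi_eq.
apply: congr_mod_trans (congr_modD (congr_mod_refl _) (qpi_valK _)) _.
apply: congr_mod_trans _ (congr_modD (congr_mod_sym (qpi_valK _)) (congr_mod_refl _)).
by rewrite addrA; apply: congr_mod_refl.
Qed.

Lemma qaddC : commutative qadd.
Proof. by move=> a b; rewrite /qadd addrC. Qed.

Lemma qadd0 : left_id (qpi 0) qadd.
Proof.
move=> a; rewrite /qadd -[RHS]qpiK; apply: qpi_eq.
rewrite -[X in congr_mod _ X]add0r.
exact: congr_modD (qpi_valK _) (congr_mod_refl _).
Qed.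

Lemma qaddN : left_inverse (qpi 0) qopp qadd.
Proof.
move=> a; apply: qpi_eq; rewrite -(addNr (val a)).
exact: congr_modD (qpi_valK _) (congr_mod_refl _).
Qed.

HB.instance Definition _ := GRing.isZmodule.Build quot qaddA qaddC qadd0 qaddN.

Lemma qscaleA a b v : qscale a (qscale b v) = qscale (a * b) v.
Proof.
apply: qpi_eq; rewrite -scalerA.
exact: congr_modZ (qpi_valK _).
Qed.

Lemma qscale1 : left_id 1 qscale.
Proof. by move=> v; rewrite /qscale scale1r qpiK. Qed.

Lemma qscaleDr : right_distributive qscale +%R.
Proof.
move=> c u v; apply: qpi_eq.
apply: congr_mod_trans (congr_modZ _ (qpi_valK _)) _; rewrite scalerDr.
by apply: congr_mod_sym; apply: congr_modD; apply: qpi_valK.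
Qed.

Lemma qscaleDl v : {morph qscale^~ v : a b / a + b}.
Proof.
move=> a b; apply: qpi_eq; rewrite scalerDl.
by apply: congr_mod_sym; apply: congr_modD; apply: qpi_valK.
Qed.

HB.instance Definition _ :=
  GRing.Zmodule_isLmodule.Build R quot qscaleA qscale1 qscaleDr qscaleDl.

Lemma qpiD x y : qpi (x + y) = qpi x + qpi y.
Proof. by apply: qpi_eq; apply: congr_mod_sym; apply: congr_modD; apply: qpi_valK. Qed.

Lemma qpiZ c x : qpi (c *: x) = c *: qpi x.
Proof. by apply: qpi_eq; apply: congr_mod_sym; apply: congr_modZ; apply: qpi_valK. Qed.

Lemma qpi_eq0 x : (qpi x = 0) <-> N x.
Proof.
split=> [/qpi_eqP | Nx]; first by rewrite /congr_mod subr0.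
by apply: qpi_eq; rewrite /congr_mod subr0.
Qed.
End Quotient.

Section Span.
Variables (K : fieldType) (V : lmodType K).
Implicit Types (s : seq V) (x : V).

Definition in_span s x :=
  exists c : 'I_(size s) -> K, x = \sum_(k < size s) c k *: s`_k.

Lemma in_span0 s : in_span s 0.
Proof. by exists (fun=> 0); rewrite big1 // => k _; rewrite scale0r. Qed.

Lemma in_spanD s x y : in_span s x -> in_span s y -> in_span s (x + y).
Proof.
move=> [c ->] [d ->]; exists (fun k => c k + d k).
by rewrite -big_split; apply: eq_bigr => k _; rewrite scalerDl.
Qed.

Lemma in_spanZ s a x : in_span s x -> in_span s (a *: x).
Proof.
move=> [c ->]; exists (fun k => a * c k).
by rewrite scaler_sumr; apply: eq_bigr => k _; rewrite scalerA.
Qed.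

Lemma in_span_sum s (I : Type) (r : seq I) (F : I -> V) :
  (forall i, in_span s (F i)) -> in_span s (\sum_(i <- r) F i).
Proof. by move=> sF; elim/big_ind: _ => //; [exact: in_span0 | exact: in_spanD]. Qed.

Lemma in_span_mem s x : x \in s -> in_span s x.
Proof.
move=> sx; pose i0 := Ordinal (etrans (index_mem x s) sx).
exists (fun k => (k == i0)%:R); rewrite (bigD1 i0) //= eqxx scale1r nth_index //.
by rewrite big1 ?addr0 // => k /negbTE ->; rewrite scale0r.
Qed.

Lemma in_span_trans s t x :
  {in s, forall y, in_span t y} -> in_span s x -> in_span t x.
Proof.
move=> st [c ->]; apply: in_span_sum => k; apply: in_spanZ.
exact/st/mem_nth.
Qed.

Lemma in_span_catl s t x : in_span s x -> in_span (s ++ t) x.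
Proof.
by apply: in_span_trans => y sy; apply: in_span_mem; rewrite mem_cat sy.
Qed.

Lemma in_span_catr s t x : in_span t x -> in_span (s ++ t) x.
Proof.
by apply: in_span_trans => y ty; apply: in_span_mem; rewrite mem_cat ty orbT.
Qed.

Lemma fin_span_sum (I : eqType) (r : seq I) (P : I -> V -> Prop) :
  {in r, forall i, exists s, forall x, P i x -> in_span s x} ->
  exists s, forall F : I -> V,
    {in r, forall i, P i (F i)} -> in_span s (\sum_(i <- r) F i).
Proof.
elim: r => [|i r IHr] finP.
  by exists [::] => F _; rewrite big_nil; apply: in_span0.
have [s sP] := finP i (mem_head i r).
have [|t tP] := IHr; first by move=> j rj; apply: finP; rewrite inE rj orbT.
exists (s ++ t) => F PF; rewrite big_cons; apply: in_spanD.
  by apply/in_span_catl/sP/PF/mem_head.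
by apply/in_span_catr/tP => j rj; apply: PF; rewrite inE rj orbT.
Qed.

Lemma kermx_row_neq0 m n (D : 'M[K]_(m, n)) :
  (n < m)%N -> exists i, row i (kermx D) != 0.
Proof.
move=> lt_nm; apply: NNPP => no_row; have := mxrank_ker D.
have -> : kermx D = 0.
  apply/row_matrixP => i; rewrite row0; apply/eqP; apply: NNPP => ?.
  by apply: no_row; exists i; apply/negP.
by move/eqP; rewrite mxrank0 eq_sym subn_eq0 leqNgt (leq_ltn_trans (rank_leq_col D)).
Qed.

(* The coefficients are a nonzero row of the kernel of the coordinate matrix. *)
Lemma span_dependent s (v : seq V) :
  (size s < size v)%N -> {in v, forall x, in_span s x} ->
  exists2 c : 'I_(size v) -> K, exists k, c k != 0 &
    \sum_(k < size v) c k *: v`_k = 0.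
Proof.
move=> ltsv sv.
have coord (k : 'I_(size v)) : in_span s v`_k by apply/sv/mem_nth.
pose d k := proj1_sig (constructive_indefinite_description _ (coord k)).
have dP (k : 'I_(size v)) : v`_k = \sum_(j < size s) d k j *: s`_j.
  by rewrite /d; case: constructive_indefinite_description.
pose D := \matrix_(k < size v, j < size s) d k j.
have [i kerD_i] := kermx_row_neq0 D ltsv.
pose x := row i (kermx D).
have xD : x *m D = 0 by rewrite /x -row_mul mulmx_ker row0.
exists (fun k => x 0 k).
  apply: NNPP => x0; apply/(negP kerD_i)/eqP/rowP => k.
  by rewrite [RHS]mxE; apply: NNPP => ?; apply: x0; exists k; apply/eqP.
under eq_bigr => k _ do rewrite dP scaler_sumr.
rewrite exchange_big /=; apply: big1 => j _.
under eq_bigr => k _ do rewrite scalerA.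
rewrite -scaler_suml.
have -> : \sum_(k < size v) x 0 k * d k j = (x *m D) 0 j.
  by rewrite mxE; apply: eq_bigr => k _; rewrite [D k j]mxE.
by rewrite xD mxE scale0r.
Qed.
End Span.

Definition corner (A : nuAlg) (g y : A) := g ** y = y /\ y ** g = y.

Definition has_local_units (A : nuAlg) :=
  forall xs : seq A, exists2 u, idempotent u & {in xs, forall x, corner u x}.

Definition has_fin_dim_corners (A : nuAlg) := forall g : A, fin_dim (corner g).

Section OrthogonalSum.
Variables (A : nuAlg) (es : seq A).
Hypothesis es_uniq : uniq es.
Hypothesis es_idem : {in es, forall f, idempotent f}.
Hypothesis es_orth : {in es &, forall f g, f != g -> f ** g = 0}.

Lemma orth_sum_corner f : f \in es -> corner (\sum_(g <- es) g) f.
Proof.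
move=> esf; rewrite /corner amul_suml amul_sumr !(bigD1_seq f) //= es_idem //.
split; rewrite big_seq_cond big1 ?addr0 // => g /andP[esg gf].
  exact: es_orth.
by apply: es_orth; rewrite // eq_sym.
Qed.

Lemma orth_sum_idem : idempotent (\sum_(g <- es) g).
Proof.
rewrite /idempotent {1}amul_sumr; apply: eq_big_seq => f esf.
by case: (orth_sum_corner esf).
Qed.
End OrthogonalSum.

Lemma mem_map_exists (T : Type) (U : eqType) (h : T -> U) (s : seq T) y :
  y \in map h s -> exists x, y = h x.
Proof. by elim: s => //= x s IHs; rewrite inE => /orP[/eqP-> | /IHs//]; exists x. Qed.

Section AUFStructure.
Variables (A : nuAlg) (I : Type) (e : I -> A).
Hypothesis e_idem : forall i, idempotent (e i).
Hypothesis e_orth : forall i j, i <> j -> e i ** e j = 0.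
Hypothesis e_fin_dim : forall i j, fin_dim (in_corner (e i) (e j)).
Hypothesis e_span : forall a : A, exists s : seq (I * I * A),
  a = \sum_(t <- s) e t.1.1 ** t.2 ** e t.1.2.

Definition in_family (f : A) := exists i, f = e i.

Lemma family_orth f g : in_family f -> in_family g -> f != g -> f ** g = 0.
Proof.
by move=> [i ->] [j ->] ne_fg; apply: e_orth => ij; rewrite ij eqxx in ne_fg.
Qed.

Lemma family_support x : exists2 es : seq A, {in es, forall f, in_family f} &
  forall u, {in es, forall f, corner u f} -> corner u x.
Proof.
have [s ->] := e_span x.
(* Reindexed by the idempotents themselves, since [I] has no decidable equality. *)
pose s' := [seq (e t.1.1, e t.1.2, t.2) | t <- s].
exists (flatten [seq [:: t.1.1; t.1.2] | t <- s']).
  move=> f /flatten_mapP[_ /mem_map_exists[t ->]].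
  by rewrite !inE => /orP[] /eqP->; eexists.
have -> : \sum_(t <- s) e t.1.1 ** t.2 ** e t.1.2 =
    \sum_(t <- s') t.1.1 ** t.2 ** t.1.2 by rewrite big_map.
move=> u es_u; rewrite /corner amul_sumr amul_suml.
have es_t t : t \in s' -> corner u t.1.1 /\ corner u t.1.2.
  move=> s't; split; apply: es_u; apply/flatten_mapP;
    by exists t; rewrite ?inE ?eqxx ?orbT.
split; apply: eq_big_seq => t /es_t[[ut1 _] [_ ut2]]; first by rewrite !amulA ut1.
by rewrite -amulA ut2.
Qed.

Lemma family_unit (xs : seq A) : exists2 es : seq A,
  uniq es /\ {in es, forall f, in_family f} &
  {in xs, forall x, corner (\sum_(f <- es) f) x}.
Proof.
have [es es_e es_xs] : exists2 es : seq A, {in es, forall f, in_family f} &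
    forall u, {in es, forall f, corner u f} -> {in xs, forall x, corner u x}.
  elim: xs => [|x xs [es es_e es_xs]]; first by exists [::].
  have [fs fs_e fs_x] := family_support x.
  exists (fs ++ es) => [f | u u_fs y].
    by rewrite mem_cat => /orP[]; [apply: fs_e | apply: es_e].
  rewrite inE => /orP[/eqP-> | xs_y].
    by apply: fs_x => f fs_f; apply: u_fs; rewrite mem_cat fs_f.
  by apply: es_xs => // f es_f; apply: u_fs; rewrite mem_cat es_f orbT.
exists (undup es); first by split=> [|f]; rewrite ?undup_uniq // mem_undup; apply: es_e.
apply: es_xs => f es_f; apply: orth_sum_corner; rewrite ?undup_uniq ?mem_undup //.
- by move=> g; rewrite mem_undup => /es_e[i ->].
- by move=> g h; rewrite !mem_undup => /es_e e_g /es_e e_h; apply: family_orth.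
Qed.

Lemma family_unit_idem (es : seq A) :
  uniq es -> {in es, forall f, in_family f} -> idempotent (\sum_(f <- es) f).
Proof.
move=> es_uniq es_e; apply: orth_sum_idem => // [f /es_e[i ->] //|f g].
by move=> /es_e e_f /es_e e_g; apply: family_orth.
Qed.

Lemma AUF_local_units : has_local_units A.
Proof.
move=> xs; have [es [es_uniq es_e] es_xs] := family_unit xs.
by exists (\sum_(f <- es) f); first exact: family_unit_idem.
Qed.

Lemma AUF_fin_dim_corners : has_fin_dim_corners A.
Proof.
move=> g; have [es [_ es_e] es_g] := family_unit [:: g].
have [ug gu] := es_g g (mem_head g [::]).
pose P f x := exists2 G : A -> A, {in es, forall h, in_corner f h (G h)} &
  x = \sum_(h <- es) G h.
have [|s sP] := @fin_span_sum _ _ _ es P.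
  move=> f /es_e[i ->].
  have [|s sG] := @fin_span_sum _ _ _ es (in_corner (e i)).
    by move=> h /es_e[j ->]; apply: e_fin_dim.
  by exists s => _ [G /sG sGx ->].
exists s => y [gy yg]; have -> : y = \sum_(f <- es) \sum_(h <- es) f ** y ** h.
  have uy : (\sum_(f <- es) f) ** y = y by rewrite -gy amulA ug.
  have yu : y ** (\sum_(f <- es) f) = y by rewrite -yg -amulA gu.
  rewrite -{1}yu -{1}uy !amul_suml; apply: eq_bigr => f _; exact: amul_sumr.
apply: sP => f _; exists (fun h => f ** y ** h) => // h _; by exists y.
Qed.
End AUFStructure.

Lemma AUF_locally_fin_dim (A : nuAlg) :
  AUF A -> has_local_units A /\ has_fin_dim_corners A.
Proof.
move=> [I [e [e_idem [e_orth [e_fin_dim e_span]]]]].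
by split; [apply: AUF_local_units e_idem e_orth e_span
  | apply: AUF_fin_dim_corners e_idem e_orth e_fin_dim e_span].
Qed.

Section PrimitiveCorner.
Variables (A : nuAlg) (p : A).
Hypothesis p_prim : primitive p.
Hypothesis p_fin : fin_dim (corner p).

Lemma p_idem : p ** p = p. Proof. by case: p_prim. Qed.

Lemma p_neq0 : p <> 0. Proof. by case: p_prim => _ []. Qed.

Lemma corner_mul a b : corner p a -> corner p b -> corner p (a ** b).
Proof. by move=> [pa ap] [pb bp]; split; rewrite ?amulA ?pa // -amulA bp. Qed.

Lemma corner_sandwich b : corner p (p ** b ** p).
Proof. by split; rewrite ?amulA ?p_idem // -amulA p_idem. Qed.

Fixpoint cpow (z : A) (k : nat) : A := if k is k'.+1 then z ** cpow z k' else p.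

Definition nilpotent (z : A) := exists k, cpow z k.+1 = 0.

Definition linv (z : A) := exists w, w ** z = p.

Section Powers.
Variable z : A.
Hypothesis zp : corner p z.

Lemma cpow_corner k : corner p (cpow z k).
Proof. by elim: k => [|k IHk] /=; [split; apply: p_idem | apply: corner_mul]. Qed.

Lemma cpowD a b : cpow z a ** cpow z b = cpow z (a + b).
Proof.
elim: a => [|a IHa] /=; first by case: (cpow_corner b).
by rewrite -amulA IHa.
Qed.

Lemma cpowSr k : cpow z k.+1 = cpow z k ** z.
Proof. by rewrite -addn1 -cpowD /= (proj2 zp). Qed.

Definition in_pow_tail t x :=
  exists l : seq (C * nat), x = \sum_(u <- l) u.1 *: cpow z (t + u.2).

Lemma pow_tail0 t : in_pow_tail t 0.
Proof. by exists [::]; rewrite big_nil. Qed.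

Lemma pow_tailD t x y : in_pow_tail t x -> in_pow_tail t y -> in_pow_tail t (x + y).
Proof. by move=> [l ->] [l' ->]; exists (l ++ l'); rewrite big_cat. Qed.

Lemma pow_tailZ t c x : in_pow_tail t x -> in_pow_tail t (c *: x).
Proof.
move=> [l ->]; exists [seq (c * u.1, u.2) | u <- l].
by rewrite big_map scaler_sumr; apply: eq_bigr => u _; rewrite scalerA.
Qed.

Lemma pow_tail_sum t (I : Type) (r : seq I) (F : I -> A) :
  (forall i, in_pow_tail t (F i)) -> in_pow_tail t (\sum_(i <- r) F i).
Proof. by move=> tF; elim/big_ind: _ => //; [exact: pow_tail0 | exact: pow_tailD]. Qed.

Lemma pow_tail_cpow t k : in_pow_tail t (cpow z (t + k)).
Proof. by exists [:: (1, k)]; rewrite big_seq1 scale1r. Qed.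

Lemma pow_tail_mono t d x : in_pow_tail (t + d) x -> in_pow_tail t x.
Proof.
move=> [l ->]; apply: pow_tail_sum => u; apply: pow_tailZ.
by rewrite -addnA; apply: pow_tail_cpow.
Qed.

Lemma pow_tail_mull t a x : in_pow_tail t x -> in_pow_tail (a + t) (cpow z a ** x).
Proof.
move=> [l ->]; exists l; rewrite amul_sumr; apply: eq_bigr => u _.
by rewrite amulZr cpowD addnA.
Qed.

Lemma pow_relation_tail n (c : 'I_n -> C) t : (exists k, c k != 0) ->
  \sum_(k < n) c k *: cpow z (t + k) = 0 ->
  exists2 m, (t <= m)%N & in_pow_tail m.+1 (cpow z m).
Proof.
elim: n c t => [|n IHn] c t [k ck]; first by case: k ck.
rewrite big_ord_recl addn0 => rel.
have [c0|c0] := eqVneq (c ord0) 0.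
  have [k' ck'] : exists k' : 'I_n, c (lift ord0 k') != 0.
    by case: (unliftP ord0 k) ck => [j -> | ->]; [exists j | rewrite c0 eqxx].
  have [|m tm tail] := IHn (fun k => c (lift ord0 k)) t.+1 (ex_intro _ k' ck').
    rewrite -[RHS]rel c0 scale0r add0r; apply: eq_bigr => i _.
    by congr (_ *: cpow z _); rewrite lift0 addSnnS.
  by exists m => //; apply: ltnW.
exists t => //.
have -> : cpow z t =
    - (c ord0)^-1 *: \sum_(i < n) c (lift ord0 i) *: cpow z (t + lift ord0 i).
  apply: (@scalerI _ _ (c ord0)) => //; rewrite scalerA mulrN mulfV // scaleN1r.
  by apply/eqP; rewrite -addr_eq0 rel.
apply/pow_tailZ/pow_tail_sum => i; apply: pow_tailZ.
by rewrite lift0 -addSnnS; apply: pow_tail_cpow.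
Qed.

Lemma pow_tail_stable : exists2 m, (0 < m)%N & in_pow_tail m.+1 (cpow z m).
Proof.
have [s s_corner] := p_fin.
pose v := [seq cpow z k.+1 | k <- iota 0 (size s).+1].
have [|x /mapP[k _ ->]|c c_neq0 rel] := span_dependent (s := s) (v := v).
- by rewrite size_map size_iota.
- exact/s_corner/cpow_corner.
apply: (pow_relation_tail (t := 1) c_neq0); rewrite -[RHS]rel.
apply: eq_bigr => k _; have := ltn_ord k; rewrite {2}size_map size_iota => ltk.
by rewrite (nth_map 0%N) ?nth_iota ?size_iota.
Qed.

Lemma pow_tail_stable_all m :
  in_pow_tail m.+1 (cpow z m) -> forall j, in_pow_tail (m + j) (cpow z m).
Proof.
move=> tail; elim=> [|j [l ->]].
  by apply: (pow_tail_mono (d := 1)); rewrite addn0 addn1.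
apply: pow_tail_sum => u; apply: pow_tailZ.
have -> : cpow z (m + j + u.2) = cpow z (j + u.2) ** cpow z m.
  by rewrite cpowD; congr cpow; lia.
apply: (pow_tail_mono (d := u.2)).
by rewrite (_ : m + j.+1 + u.2 = (j + u.2) + m.+1)%N; [apply: pow_tail_mull | lia].
Qed.

(* Fitting's lemma in the local algebra [pAp]: if [z ^ m = E z ^ m] with [E]
   in the span of [z ^ m], [z ^ m.+1], ..., then [E] is an idempotent of
   [pAp], hence [0] or [p]. *)
Lemma corner_nilpotent_or_linv : nilpotent z \/ linv z.
Proof.
have [m m_gt0 /pow_tail_stable_all/(_ m)[l zm]] := pow_tail_stable.
pose E := \sum_(u <- l) u.1 *: cpow z (m + u.2).
have Ezm : E ** cpow z m = cpow z m.
  rewrite /E amul_suml [RHS]zm; apply: eq_bigr => u _.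
  by rewrite amulZl cpowD; congr (_ *: cpow z _); lia.
have E_idem : idempotent E.
  rewrite /idempotent {2}/E amul_sumr; apply: eq_bigr => u _.
  by rewrite amulZr -cpowD amulA Ezm.
have E_corner : corner p E.
  rewrite /corner /E amul_sumr amul_suml.
  by split; apply: eq_bigr => u _; have [pz zp'] := cpow_corner (m + u.2);
    rewrite ?amulZr ?amulZl ?pz ?zp'.
case: p_prim => _ [_ /(_ E E_idem E_corner)] [E0 | Ep].
  by left; exists m.-1; rewrite prednK // -Ezm E0 amul0l.
right; exists (\sum_(u <- l) u.1 *: cpow z (m.-1 + u.2)).
rewrite amul_suml -Ep /E; apply: eq_bigr => u _; rewrite amulZl -cpowSr.
by congr (_ *: cpow z _); rewrite -addSn prednK.
Qed.

Lemma linv_not_nilpotent : linv z -> ~ nilpotent z.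
Proof.
move=> [w wz] [k zk]; apply: p_neq0.
have down n : cpow z n.+1 = 0 -> cpow z n = 0.
  move=> zn; rewrite -(proj1 (cpow_corner n)) -wz -amulA.
  by rewrite (_ : z ** cpow z n = cpow z n.+1) // zn amul0r.
by elim: k zk => [|k IHk] /down // /IHk.
Qed.

Lemma nilpotent_linv_subr : nilpotent z -> linv (p - z).
Proof.
move=> [k zk]; exists (\sum_(i < k.+1) cpow z i).
suff geom n : (\sum_(i < n) cpow z i) ** (p - z) = p - cpow z n.
  by rewrite geom zk subr0.
elim: n => [|n IHn]; first by rewrite big_ord0 amul0l subrr.
rewrite big_ord_recr amulDl IHn amulBr (proj2 (cpow_corner n)) -cpowSr.
by rewrite addrA subrK.
Qed.
End Powers.

(* If [w (y1 + y2) = p] then [w y2] is nilpotent, so [w y1 = p - w y2] is left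
   invertible. *)
Lemma not_linvD y1 y2 : corner p y1 -> corner p y2 ->
  ~ linv y1 -> ~ linv y2 -> ~ linv (y1 + y2).
Proof.
move=> y1p y2p y1N y2N [w w_y].
pose w' := p ** w ** p.
have w'_y : w' ** (y1 + y2) = p.
  by rewrite -amulA amulDr (proj1 y1p) (proj1 y2p) -amulA w_y p_idem.
have w'y_corner y : corner p y -> corner p (w' ** y).
  exact/corner_mul/corner_sandwich.
have w'y_nil y : corner p y -> ~ linv y -> nilpotent (w' ** y).
  move=> yp yN; have [//|[v v_y]] := corner_nilpotent_or_linv (w'y_corner y yp).
  by case: yN; exists (v ** w'); rewrite -amulA.
have [v v_y] := nilpotent_linv_subr (w'y_corner y2 y2p) (w'y_nil y2 y2p y2N).
apply: (linv_not_nilpotent (w'y_corner y1 y1p)) (w'y_nil y1 y1p y1N).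
by exists v; rewrite -[w' ** y1](addrK (w' ** y2)) -amulDr w'_y.
Qed.
End PrimitiveCorner.

Section LeftQuotient.
Variables (A : nuAlg) (N : subspace A).
Hypothesis N_mull : forall b x, N x -> N (b ** x).

Definition qact (a : A) (q : quot N) : quot N := qpi N (a ** val q).

Lemma qact_qpi a x : qact a (qpi N x) = qpi N (a ** x).
Proof.
apply: qpi_eq; rewrite /congr_mod -amulBr; apply: N_mull; exact: qpi_valK.
Qed.

Lemma qactDl a b q : qact (a + b) q = qact a q + qact b q.
Proof. by rewrite /qact amulDl qpiD. Qed.

Lemma qactDr a q q' : qact a (q + q') = qact a q + qact a q'.
Proof. by rewrite -[q]qpiK -[q']qpiK -qpiD !qact_qpi amulDr qpiD. Qed.

Lemma qactZl c a q : qact (c *: a) q = c *: qact a q.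
Proof. by rewrite /qact amulZl qpiZ. Qed.

Lemma qactZr c a q : qact a (c *: q) = c *: qact a q.
Proof. by rewrite -[q]qpiK -qpiZ !qact_qpi amulZr qpiZ. Qed.

Lemma qactM a b q : qact (a ** b) q = qact a (qact b q).
Proof. by rewrite [qact b q]/qact qact_qpi amulA. Qed.

Definition quot_amod : amod A := AMod qactDl qactDr qactZl qactZr qactM.
End LeftQuotient.

Section ModuleFacts.
Variable A : nuAlg.
Implicit Types M N : amod A.

Definition acts_on (a : A) M := exists m : M, act a m <> 0.

Lemma irreducible_cyclic M (m : M) : irreducible M -> m <> 0 ->
  (exists a, act a m = m) -> forall y : M, exists a, y = act a m.
Proof.
move=> [_ M_irr] m_neq0 [a0 a0m].
have Am_sub : submodule (fun y : M => exists a, y = act a m).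
  split; first by exists 0; rewrite act0l.
  split; first by move=> _ _ [a ->] [b ->]; exists (a + b); rewrite actDl.
  split; first by move=> c _ [a ->]; exists (c *: a); rewrite actZl.
  by move=> b _ [a ->]; exists (b ** a); rewrite actM.
by case: (M_irr _ Am_sub) => // Am0; case: m_neq0; apply: Am0; exists a0.
Qed.

Lemma mod_iso_of_ann M N (m : M) (n : N) :
  (forall y : M, exists a, y = act a m) -> (forall y : N, exists a, y = act a n) ->
  (forall a, act a m = 0 <-> act a n = 0) -> mod_iso M N.
Proof.
move=> m_gen n_gen ann.
have eq_ann (P : amod A) (x : P) (a b : A) : act a x = act b x <-> act (a - b) x = 0.
  by rewrite actBl; split=> [-> | /eqP]; rewrite ?subrr // subr_eq0 => /eqP.
have transfer (a b : A) : act a m = act b m <-> act a n = act b n.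
  by rewrite !eq_ann.
pose fa y := proj1_sig (constructive_indefinite_description _ (m_gen y)).
pose ga y := proj1_sig (constructive_indefinite_description _ (n_gen y)).
have faP y : y = act (fa y) m by rewrite /fa; case: constructive_indefinite_description.
have gaP y : y = act (ga y) n by rewrite /ga; case: constructive_indefinite_description.
have fE a : act (fa (act a m)) n = act a n by apply/transfer; rewrite -faP.
have gE a : act (ga (act a n)) m = act a m by apply/transfer; rewrite -gaP.
exists (fun y => act (fa y) n); split.
  by move=> x y; rewrite {1}(faP x) {1}(faP y) -actDl fE actDl.
split; first by move=> c x; rewrite {1}(faP x) -actZl fE actZl.
split; first by move=> a x; rewrite {1}(faP x) -actM fE actM.
exists (fun y => act (ga y) m) => [x | y]; first by rewrite {2}(faP x) gE.
by rewrite {2}(gaP y) fE.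
Qed.

Lemma mod_iso_sym M N : mod_iso M N -> mod_iso N M.
Proof.
move=> [f [fD [fZ [fA [g gK fK]]]]]; exists g; split.
  by move=> x y; apply: (can_inj gK); rewrite fD !fK.
split; first by move=> c x; apply: (can_inj gK); rewrite fZ !fK.
split; first by move=> a x; apply: (can_inj gK); rewrite fA !fK.
by exists f.
Qed.

Lemma mod_iso_acts_on M N (a : A) : mod_iso M N -> acts_on a M -> acts_on a N.
Proof.
move=> [f [fD [_ [fA [g gK _]]]]] [m am]; exists (f m); rewrite -fA => fam.
have f0 : f 0 = 0 by apply: (@addrI _ (f 0)); rewrite -fD !addr0.
by apply: am; rewrite -[act a m]gK fam -f0 gK.
Qed.

Definition regular_amod : amod A :=
  AMod (@amulDl A) (@amulDr A) (@amulZl A) (@amulZr A)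
    (fun a b m => esym (amulA a b m)).
End ModuleFacts.

Lemma idem_equiv_of_retraction (A : nuAlg) (p q u v : A) :
  idempotent p -> primitive q -> in_corner q p u -> in_corner p q v ->
  v ** u = p -> p <> 0 -> idem_equiv p q.
Proof.
move=> p_idem [q_idem [_ q_min]] qup pvq vu p_neq0.
have [[x ux] [y vy]] := (qup, pvq).
have up : u ** p = u by rewrite ux -amulA p_idem.
have qu : q ** u = u by rewrite ux !amulA q_idem.
have pv : p ** v = v by rewrite vy !amulA p_idem.
have vq : v ** q = v by rewrite vy -amulA q_idem.
have uv_idem : idempotent (u ** v).
  by rewrite /idempotent -amulA (amulA v) vu amulA up.
have uv_le : idem_le (u ** v) q by split; rewrite ?amulA ?qu // -amulA vq.
have [uv0 | uvq] := q_min _ uv_idem uv_le.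
  have vuvu : v ** (u ** v) ** u = p by rewrite amulA vu -amulA vu p_idem.
  by case: p_neq0; rewrite -vuvu uv0 amul0r amul0l.
by exists u, v.
Qed.

Section SimpleModule.
Variables (A : nuAlg) (p : A).
Hypothesis p_prim : primitive p.
Hypothesis p_fin : fin_dim (corner p).

Local Notation linv := (linv p).

Lemma corner_sandwich_mul a x : corner p (p ** a ** x ** p).
Proof. by rewrite -(amulA p a x); apply: corner_sandwich. Qed.

Lemma linvZ c y : linv (c *: y) -> linv y.
Proof. by move=> [w wy]; exists (c *: w); rewrite amulZl -amulZr. Qed.

Definition in_maxl (x : A) := forall a, ~ linv (p ** a ** x ** p).

Lemma not_linv0 : ~ linv 0.
Proof. by move=> [w]; rewrite amul0r => /esym; apply: p_neq0. Qed.

Lemma maxl0 : in_maxl 0.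
Proof. by move=> a; rewrite amul0r amul0l; apply: not_linv0. Qed.

Lemma maxlD x y : in_maxl x -> in_maxl y -> in_maxl (x + y).
Proof.
move=> Nx Ny a; rewrite amulDr amulDl.
by apply: not_linvD => //; apply: corner_sandwich_mul.
Qed.

Lemma maxlZ c x : in_maxl x -> in_maxl (c *: x).
Proof. by move=> Nx a; rewrite amulZr amulZl => /linvZ; apply: Nx. Qed.

Lemma maxl_mull b x : in_maxl x -> in_maxl (b ** x).
Proof. by move=> Nx a; rewrite !amulA -(amulA _ a b); apply: Nx. Qed.

Definition maxl : subspace A := Subspace maxl0 maxlD maxlZ.

Definition simple_amod : amod A := @quot_amod A maxl maxl_mull.

Lemma simple_amod_act a x :
  @act A simple_amod a (qpi maxl x) = qpi maxl (a ** x).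
Proof. exact: (@qact_qpi A maxl maxl_mull a x). Qed.

Lemma simple_amod_acts_on : acts_on p simple_amod.
Proof.
exists (qpi maxl p); rewrite simple_amod_act (p_idem p_prim) => /qpi_eq0 /(_ p); apply.
by exists p; rewrite !(p_idem p_prim).
Qed.

Lemma simple_amod_irreducible : irreducible simple_amod.
Proof.
split.
  have [m pm] := simple_amod_acts_on.
  by exists m => m0; apply: pm; rewrite m0 act0r.
move=> P [_ [_ [_ P_act]]].
case: (classic (exists q, P q /\ q <> 0)) => [[q [Pq q_neq0]] | no_q]; last first.
  by left=> m Pm; apply: NNPP => m_neq0; apply: no_q; exists m.
right=> m; have [a [w w_q]] : exists a, linv (p ** a ** val q ** p).
  apply: NNPP => q_maxl; apply/q_neq0; rewrite -[q]qpiK; apply/qpi_eq0 => a ?.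
  by apply: q_maxl; exists a.
have -> : m = act (val m ** w ** p ** a) q.
  rewrite -{1}[m]qpiK -[q in RHS]qpiK simple_amod_act; apply: qpi_eq => b.
  rewrite /congr_mod amulBr amulBl.
  have -> : p ** b ** (val m ** w ** p ** a ** val q) ** p =
      p ** b ** val m ** (w ** (p ** a ** val q ** p)) by rewrite !amulA.
  by rewrite w_q subrr; apply: not_linv0.
exact: P_act.
Qed.

Lemma simple_amod_quasicoherent : has_local_units A -> quasicoherent simple_amod.
Proof.
move=> local_units m.
have [u _ /(_ (val m) (mem_head _ _))[um _]] := local_units [:: val m].
by exists u; rewrite -[m in act _ m]qpiK simple_amod_act um qpiK.
Qed.

Lemma fixed_linv (M : amod A) (m : M) z :
  corner p z -> m <> 0 -> act z m = m -> linv z.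
Proof.
move=> zp m_neq0 zm; have [[k zk]|//] := corner_nilpotent_or_linv p_prim p_fin zp.
have pm : act p m = m by rewrite -{1}zm -actM (proj1 zp).
have zkm n : act (cpow p z n) m = m by elim: n => //= n IHn; rewrite actM IHn.
by case: m_neq0; rewrite -(zkm k.+1) zk act0l.
Qed.

(* If [x n <> 0], pick [a] with [a x n = n]; then [p a x p] fixes [n], so it has
   a left inverse [w], and [m = w p a x p m = 0]. *)
Lemma fixed_ann (M N : amod A) (m : M) (n : N) :
  irreducible N -> quasicoherent N -> m <> 0 -> act p m = m ->
  n <> 0 -> act p n = n -> forall x, act x m = 0 -> act x n = 0.
Proof.
move=> N_irr N_qc m_neq0 pm n_neq0 pn x xm; apply: NNPP => xn_neq0.
have [a xna] := irreducible_cyclic N_irr xn_neq0 (N_qc (act x n)) n.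
have [w w_z] : linv (p ** a ** x ** p).
  by apply: (fixed_linv (corner_sandwich_mul a x) n_neq0); rewrite !actM pn -xna.
by apply: m_neq0; rewrite -pm -w_z !actM pm xm !act0r.
Qed.

Lemma mod_iso_of_acts_on (M N : amod A) :
  irreducible M -> quasicoherent M -> irreducible N -> quasicoherent N ->
  acts_on p M -> acts_on p N -> mod_iso M N.
Proof.
move=> M_irr M_qc N_irr N_qc [m0 pm0] [n0 pn0].
have pm : act p (act p m0) = act p m0 by rewrite -actM (p_idem p_prim).
have pn : act p (act p n0) = act p n0 by rewrite -actM (p_idem p_prim).
apply: (mod_iso_of_ann (irreducible_cyclic M_irr pm0 (ex_intro _ p pm))
  (irreducible_cyclic N_irr pn0 (ex_intro _ p pn))).
by move=> a; split; apply: fixed_ann.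
Qed.

Lemma idem_equiv_of_acts_on q (M : amod A) : primitive q -> irreducible M ->
  acts_on p M -> acts_on q M -> idem_equiv p q.
Proof.
move=> q_prim M_irr [m0 pm0] [n0 qn0]; have [q_idem _] := q_prim.
have pm : act p (act p m0) = act p m0 by rewrite -actM (p_idem p_prim).
have qn : act q (act q n0) = act q n0 by rewrite -actM q_idem.
have [a ma] := irreducible_cyclic M_irr qn0 (ex_intro _ q qn) (act p m0).
have [b nb] := irreducible_cyclic M_irr pm0 (ex_intro _ p pm) (act q n0).
pose x := p ** a ** q; pose y := q ** b ** p.
have z_corner : corner p (x ** y).
  have -> : x ** y = p ** (a ** q ** b) ** p.
    by rewrite /x /y !amulA -(amulA _ q q) q_idem.
  exact: corner_sandwich.
have [w w_z] : linv (x ** y).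
  apply: (fixed_linv z_corner pm0); rewrite /x /y !actM.
  by rewrite pm -nb !qn -ma pm.
apply: (@idem_equiv_of_retraction _ p q y (p ** w ** x)) => //.
- exact: p_prim.1.
- by exists b.
- by exists (w ** p ** a); rewrite /x !amulA.
- by rewrite -(amulA p w x) -(amulA p) -(amulA w) w_z (p_idem p_prim).
- exact: p_neq0.
Qed.
End SimpleModule.

Section PrimitiveDecomposition.
Variable A : nuAlg.
Implicit Types f g h : A.

Definition orth_below g (fs : seq A) :=
  [/\ uniq fs, {in fs, forall f, [/\ idempotent f, f <> 0 & idem_le f g]}
    & {in fs &, forall f h, f != h -> f ** h = 0}].

Lemma orth_below_size g : fin_dim (corner g) ->
  exists n, forall fs, orth_below g fs -> (size fs <= n)%N.
Proof.
move=> [s s_corner]; exists (size s) => fs [fs_uniq fs_le fs_orth].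
rewrite leqNgt; apply/negP => lt_s_fs.
have [f /fs_le[_ _ [gf fg]]|c [k ck] rel] := span_dependent lt_s_fs.
  by apply: s_corner.
have fs_k : fs`_k \in fs by apply: mem_nth.
have [fk_idem fk_neq0 _] := fs_le _ fs_k.
have : fs`_k ** \sum_(j < size fs) c j *: fs`_j = c k *: fs`_k.
  rewrite amul_sumr (bigD1 k) //= amulZr fk_idem big1 ?addr0 // => j jk.
  by rewrite amulZr fs_orth ?mem_nth ?nth_uniq // ?scaler0 // eq_sym.
rewrite rel amul0r => /esym /eqP; rewrite scaler_eq0 (negbTE ck) /=.
by move/eqP.
Qed.

Lemma orth_below_complement g f fs : idempotent g -> idempotent f ->
  idem_le f g -> g - f <> 0 -> orth_below f fs -> orth_below g ((g - f) :: fs).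
Proof.
move=> g_idem f_idem [gf fg] k_neq0 [fs_uniq fs_le fs_orth].
have k_idem : idempotent (g - f).
  by rewrite /idempotent amulBl !amulBr g_idem gf fg f_idem subrr subr0.
have k_le : idem_le (g - f) g by split; rewrite ?amulBr ?amulBl g_idem ?gf ?fg.
have k_orth h : h \in fs -> (g - f) ** h = 0 /\ h ** (g - f) = 0.
  move=> /fs_le[_ _ h_le]; have [gh hg] := idem_le_trans h_le (conj gf fg).
  by case: h_le => fh hf; rewrite amulBl amulBr gh fh hg hf !subrr.
split.
- rewrite /= fs_uniq andbT; apply/negP => /k_orth[kk _].
  by apply: k_neq0; rewrite -k_idem.
- move=> h; rewrite inE => /orP[/eqP-> // | /fs_le[h_idem h_neq0 h_le]].
  by split=> //; apply: idem_le_trans h_le (conj gf fg).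
- move=> h1 h2; rewrite !inE => /orP[/eqP-> | fs_h1] /orP[/eqP-> | fs_h2];
    rewrite ?eqxx // => ne.
  + exact: (k_orth _ fs_h2).1.
  + exact: (k_orth _ fs_h1).2.
  + exact: fs_orth.
Qed.

Lemma orth_below_self g : idempotent g -> g <> 0 -> orth_below g [:: g].
Proof.
move=> g_idem g_neq0; split=> // [f | f h]; rewrite !inE => /eqP->//.
by move=> /eqP->; rewrite eqxx.
Qed.

Lemma primitive_sum_of_bound n g : idempotent g ->
  (forall fs, orth_below g fs -> (size fs <= n)%N) ->
  exists2 ps, {in ps, forall q, primitive q} & g = \sum_(q <- ps) q.
Proof.
elim: n g => [|n IHn] g g_idem bound;
  (have [-> | g_neq0] := classic (g = 0); first by exists [::]; rewrite ?big_nil).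
  by have := bound _ (orth_below_self g_idem g_neq0).
have [g_prim | g_nprim] := classic (primitive g).
  by exists [:: g]; rewrite ?big_seq1 // => q; rewrite inE => /eqP->.
have [f [f_idem f_le f_neq0 f_neq_g]] :
    exists f, [/\ idempotent f, idem_le f g, f <> 0 & f <> g].
  apply: NNPP => no_f; apply: g_nprim; do 2!split=> //; move=> f f_idem f_le.
  have [|f_neq0] := classic (f = 0); first by left.
  have [|f_neq_g] := classic (f = g); first by right.
  by case: no_f; exists f.
have k_neq0 : g - f <> 0 by move/eqP; rewrite subr_eq0 => /eqP/esym.
have [gf fg] := f_le.
have k_idem : idempotent (g - f).
  by rewrite /idempotent amulBl !amulBr g_idem gf fg f_idem subrr subr0.
have k_le : idem_le (g - f) g by split; rewrite ?amulBr ?amulBl g_idem ?gf ?fg.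
have [ps ps_prim f_sum] :
    exists2 ps, {in ps, forall q, primitive q} & f = \sum_(q <- ps) q.
  apply: IHn => // fs /(orth_below_complement g_idem f_idem f_le k_neq0).
  exact: bound.
have [ps' ps'_prim k_sum] :
    exists2 ps, {in ps, forall q, primitive q} & g - f = \sum_(q <- ps) q.
  apply: IHn => // fs; have f_eq : g - (g - f) = f by rewrite subKr.
  by move/(orth_below_complement g_idem k_idem k_le); rewrite f_eq => /(_ f_neq0)/bound.
exists (ps ++ ps'); last by rewrite big_cat /= -f_sum -k_sum addrC subrK.
by move=> q; rewrite mem_cat => /orP[]; [apply: ps_prim | apply: ps'_prim].
Qed.

Lemma primitive_sum g : idempotent g -> fin_dim (corner g) ->
  exists2 ps, {in ps, forall q, primitive q} & g = \sum_(q <- ps) q.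
Proof.
by move=> g_idem /orth_below_size[n bound]; apply: primitive_sum_of_bound bound.
Qed.
End PrimitiveDecomposition.

Section IdempotentEquivalence.
Variable A : nuAlg.

Lemma idem_equiv_acts_on (p q : A) (M : amod A) :
  idem_equiv p q -> acts_on p M -> acts_on q M.
Proof.
move=> [_ [v [[x ->] [_ [vu _]]]]] [m pm]; exists (act x (act p m)) => qxpm.
by apply: pm; rewrite -vu !actM qxpm act0r.
Qed.

(* An idempotent [g <= q] is transported to [v g u <= p] and back. *)
Lemma idem_equiv_primitive (p q : A) : primitive p -> idem_equiv p q -> primitive q.
Proof.
move=> [p_idem [p_neq0 p_min]] [u [v [[x ux] [[y vy] [vu uv]]]]].
have up : u ** p = u by rewrite ux -amulA p_idem.
have pv : p ** v = v by rewrite vy !amulA p_idem.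
have q_idem : idempotent q by rewrite /idempotent -uv -amulA (amulA v) vu amulA up.
have qu : q ** u = u by rewrite ux !amulA q_idem.
have vq : v ** q = v by rewrite vy -amulA q_idem.
split=> //; split=> [q0 | g g_idem [qg gq]].
  by apply: p_neq0; rewrite -vu ux q0 !amul0l amul0r.
have h_idem : idempotent (v ** g ** u).
  rewrite /idempotent -!amulA (amulA u) (amulA (u ** v)) uv -(amulA q) (amulA q g) qg.
  by rewrite (amulA g) g_idem.
have h_le : idem_le (v ** g ** u) p by split; rewrite ?amulA ?pv // -!amulA up.
have g_eq : g = u ** (v ** g ** u) ** v by rewrite !amulA uv qg -amulA uv gq.
have [h0 | hp] := p_min _ h_idem h_le; [left | right].
  by rewrite g_eq h0 amul0r amul0l.
by rewrite g_eq hp up uv.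
Qed.
End IdempotentEquivalence.

Section Classification.
Variable A : nuAlg.
Hypothesis local_units : has_local_units A.
Hypothesis fin_corners : has_fin_dim_corners A.

Definition simple_for (a : A) (M : amod A) :=
  [/\ quasicoherent M, irreducible M & acts_on a M].

Lemma generating_acts_on (e : A) (M : amod A) :
  generating e -> quasicoherent M -> irreducible M -> acts_on e M.
Proof.
move=> [e_idem e_gen] M_qc M_irr; have [f [_ [_ [f_act f_onto]]]] := e_gen M M_qc M_irr.
have Ae_e : left_ideal_of e e by exists e.
exists (f e); rewrite -f_act // e_idem => fe0.
have [[m m_neq0] _] := M_irr; apply: m_neq0.
by have [_ [a ->] <-] := f_onto m; rewrite f_act // fe0 act0r.
Qed.

Lemma generating_of_acts_on (e : A) : idempotent e ->
  (forall M : amod A, quasicoherent M -> irreducible M -> acts_on e M) -> generating e.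
Proof.
move=> e_idem e_acts; split=> // M M_qc M_irr.
have [m em] := e_acts M M_qc M_irr; set n := act e m in em.
exists (fun x => act x n); split; first by move=> x y _ _; rewrite actDl.
split; first by move=> c x _; rewrite actZl.
split; first by move=> a x _; rewrite actM.
have Ae_sub : submodule (fun y : M => exists2 x, left_ideal_of e x & act x n = y).
  split; first by exists 0; [exists 0; rewrite amul0l | rewrite act0l].
  split; first by move=> _ _ [_ [a ->] <-] [_ [b ->] <-]; exists ((a + b) ** e);
    [exists (a + b) | rewrite amulDl actDl].
  split; first by move=> c _ [_ [a ->] <-]; exists ((c *: a) ** e);
    [exists (c *: a) | rewrite amulZl actZl].
  by move=> b _ [_ [a ->] <-]; exists ((b ** a) ** e);
    [exists (b ** a) | rewrite !actM].
have [Ae0 | //] := M_irr.2 _ Ae_sub.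
by case: em; apply: Ae0; exists e; [exists e | rewrite /n -actM e_idem].
Qed.

Lemma primitive_acts_on (M : amod A) : quasicoherent M -> irreducible M ->
  exists2 q, primitive q & acts_on q M.
Proof.
move=> M_qc [[m m_neq0] _]; have [a am] := M_qc m.
have [u u_idem /(_ a (mem_head _ _))[ua _]] := local_units [:: a].
have [ps ps_prim u_sum] := primitive_sum u_idem (fin_corners u).
have : act (\sum_(q <- ps) q) m <> 0 by rewrite -u_sum -am -actM ua am.
by move=> /act_sum_neq0[q /ps_prim q_prim qm]; exists q => //; exists m.
Qed.

Lemma fin_irr_classes_of_seq (qs : seq A) :
  (forall M : amod A, quasicoherent M -> irreducible M ->
     exists2 q, q \in qs & primitive q /\ acts_on q M) ->
  fin_irr_classes A.
Proof.
move=> qs_cover.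
pose Ms (k : 'I_(size qs)) := epsilon (inhabits (regular_amod A)) (simple_for qs`_k).
exists (size qs), Ms => M M_qc M_irr.
have [q qs_q [q_prim qM]] := qs_cover M M_qc M_irr.
pose k := Ordinal (etrans (index_mem q qs) qs_q).
have [Mk_qc Mk_irr qMk] : simple_for q (Ms k).
  rewrite /Ms /= nth_index //.
  by apply: (epsilon_spec (inhabits (regular_amod A)) (simple_for q)); exists M.
by exists k; apply: (mod_iso_of_acts_on q_prim (fin_corners q)).
Qed.

Lemma fin_irr_classes_of_generating (e : A) : generating e -> fin_irr_classes A.
Proof.
move=> e_gen; have [ps ps_prim e_sum] := primitive_sum e_gen.1 (fin_corners e).
apply: (fin_irr_classes_of_seq (qs := ps)) => M M_qc M_irr.
have [m] := generating_acts_on e_gen M_qc M_irr.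
rewrite e_sum => /act_sum_neq0[q ps_q qm].
by exists q => //; split; [apply: ps_prim | exists m].
Qed.

Lemma generating_of_fin_irr_classes : fin_irr_classes A -> exists e : A, generating e.
Proof.
move=> [n [Ms Ms_cover]].
pose a k := epsilon (inhabits (0 : A)) (fun a => acts_on a (Ms k)).
have [u u_idem u_unit] := local_units [seq a k | k <- enum 'I_n].
exists u; apply: generating_of_acts_on => // M M_qc M_irr.
have [k iso] := Ms_cover M M_qc M_irr.
have [b bM] : exists b, acts_on b M.
  by have [[m m_neq0] _] := M_irr; have [b bm] := M_qc m; exists b, m; rewrite bm.
have [mk akm] : acts_on (a k) (Ms k).
  by apply: (epsilon_spec (inhabits (0 : A)) (fun a => acts_on a (Ms k))); exists b;
    apply: mod_iso_acts_on iso bM.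
have [ua _] := u_unit (a k) (map_f _ (mem_enum _ k)).
apply: (mod_iso_acts_on (mod_iso_sym iso)).
by exists (act (a k) mk); rewrite -actM ua.
Qed.

Lemma fin_prim_classes_of_fin_irr_classes : fin_irr_classes A -> fin_prim_classes A.
Proof.
move=> [n [Ms Ms_cover]].
pose q k := epsilon (inhabits (0 : A)) (fun q => primitive q /\ acts_on q (Ms k)).
exists [seq q k | k <- enum 'I_n] => p p_prim; have p_fin := fin_corners p.
have Mp_irr := simple_amod_irreducible p_prim p_fin.
have pMp := simple_amod_acts_on p_prim p_fin.
have Mp_qc : quasicoherent (simple_amod p_prim p_fin).
  exact: simple_amod_quasicoherent.
have [k iso] := Ms_cover _ Mp_qc Mp_irr.
have [qk_prim qk_Mk] : primitive (q k) /\ acts_on (q k) (Ms k).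
  apply: (epsilon_spec (inhabits (0 : A)) (fun q => primitive q /\ acts_on q (Ms k))).
  by exists p; split=> //; apply: mod_iso_acts_on iso pMp.
exists (q k); first exact: map_f (mem_enum _ k).
apply: (idem_equiv_of_acts_on p_prim p_fin qk_prim Mp_irr pMp).
exact: mod_iso_acts_on (mod_iso_sym iso) qk_Mk.
Qed.

Lemma fin_irr_classes_of_fin_prim_classes : fin_prim_classes A -> fin_irr_classes A.
Proof.
move=> [s s_cover]; apply: (fin_irr_classes_of_seq (qs := s)) => M M_qc M_irr.
have [p p_prim pM] := primitive_acts_on M_qc M_irr.
have [q s_q pq] := s_cover p p_prim.
by exists q => //; split;
  [apply: idem_equiv_primitive pq | apply: idem_equiv_acts_on pq pM].
Qed.
End Classification.

Theorem corollary6p4 (A : nuAlg) (HA : AUF A) :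
  ((exists e : A, generating e) <-> fin_irr_classes A) /\
  (fin_irr_classes A <-> fin_prim_classes A).
Proof.
have [local_units fin_corners] := AUF_locally_fin_dim HA.
split; split.
- by move=> [e e_gen]; apply: fin_irr_classes_of_generating e_gen.
- exact: generating_of_fin_irr_classes.
- exact: fin_prim_classes_of_fin_irr_classes.
- exact: fin_irr_classes_of_fin_prim_classes.
Qed.
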